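(* Consider the distributed computing problem described in the context with $N$ files and $Q$ Reduce functions, and fix a number of servers $K$, a Map assignment $\boldsymbol{\mathcal M}=(\mathcal M_1,\ldots,\mathcal M_K)$ and a Reduce assignment $\boldsymbol{\mathcal W}=(\mathcal W_1,\ldots,\mathcal W_K)$. For integers $s,d$, let $a_{s,d}$ be the number of intermediate values $v_{q,n}$ that are available at exactly $s$ servers and required by (but not available at) exactly $d$ servers; here $v_{q,n}$ is available at server $k$ if $n\in\mathcal M_k$, and required by server $k$ if $q\in\mathcal W_k$. Then every valid shuffling scheme has communication load \[ L\ \ge\ \frac{1}{QN}\sum_{s=1}^{K}\sum_{d=1}^{K-s}a_{s,d}\,\frac{d}{s+d-1}. \]
   Context: Problem: given $N$ input files $w_1,\ldots,w_N\in\mathbb{F}_{2^F}$, compute $Q$ output functions $\phi_q(w_1,\ldots,w_N)=h_q(g_{q,1}(w_1),\ldots,g_{q,N}(w_N))$, $q\in\{1,\ldots,Q\}$, where the Map function $\vec g_n=(g_{1,n},\ldots,g_{Q,n})$ maps file $w_n$ to $Q$ intermediate values $v_{q,n}=g_{q,n}(w_n)\in\mathbb{F}_{2^T}$ and $h_q$ is a function of $(v_{q,1},\ldots,v_{q,N})$. With $K$ servers, the Map assignment satisfies $\mathcal M_k\subseteq\{1,\ldots,N\}$, $\bigcup_k\mathcal M_k=\{1,\ldots,N\}$ (server $k$ computes $\vec g_n(w_n)$ for all $n\in\mathcal M_k$); the Reduce assignment $\mathcal W_1,\ldots,\mathcal W_K$ is a partition of $\{1,\ldots,Q\}$ into pairwise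 disjoint, possibly empty sets (server $k$ computes $h_q$ for $q\in\mathcal W_k$). A shuffling scheme: each server $k$ sends a message $X_k=\psi_k(\{\vec g_n:n\in\mathcal M_k\})$, a function of its locally computed intermediate values, multicast to a subset of the other servers. It is valid if, for every possible realization of the intermediate values, each server $k$ can decode all $v_{q,n}$ with $q\in\mathcal W_k$ from its locally computed intermediate values and the messages $X_1,\ldots,X_K$. The communication load $L$ is the total number of bits sent by all servers, divided by $QNT$. *)

From HB Require Import structures.
From mathcomp Require Import all_boot all_order all_algebra.
Set Implicit Arguments. Unset Strict Implicit. Unset Printing Implicit Defensive.
Import Order.TTheory GRing.Theory Num.Theory.

(* An element of F_{2^T}, viewed as a string of T bits. *)
Definition bits (T : nat) := 'I_T -> bool.
Definition bits0 (T : nat) : bits T := fun _ : 'I_T => false.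
Arguments bits0 : clear implicits.

Definition realization (Q N T : nat) := 'I_Q -> 'I_N -> bits T.

(* The intermediate values computed locally at server k (those v_{q,n} with
   n \in M_k); other entries are blanked out with a fixed default. *)
Definition local (K Q N T : nat) (M : 'I_K -> {set 'I_N}) (k : 'I_K)
    (v : realization Q N T) : realization Q N T :=
  fun q n => if n \in M k then v q n else bits0 T.

Arguments local {K Q N T} M k v.

Definition map_assignment (K N : nat) (M : 'I_K -> {set 'I_N}) : Prop :=
  \bigcup_(k < K) M k = [set: 'I_N].

Definition reduce_assignment (K Q : nat) (W : 'I_K -> {set 'I_Q}) : Prop :=
  (forall k k' : 'I_K, k != k' -> [disjoint W k & W k']) /\
  \bigcup_(k < K) W k = [set: 'I_Q].

(* A shuffling scheme: server k sends a message of len k bits,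
   X_k = enc k (local values of k), multicast to the servers in recv k. *)
Record shuffle_scheme (K Q N T : nat) := ShuffleScheme {
  len  : 'I_K -> nat;
  enc  : forall k : 'I_K, realization Q N T -> bits (len k);
  recv : 'I_K -> {set 'I_K}
}.
Arguments len {K Q N T} s k.
Arguments enc {K Q N T} s k v _.
Arguments recv {K Q N T} s k.

Definition received (K Q N T : nat) (M : 'I_K -> {set 'I_N})
    (S : shuffle_scheme K Q N T) (k : 'I_K) (v : realization Q N T) :
    forall k' : 'I_K, bits (len S k') :=
  fun k' => if k \in recv S k' then enc S k' (local M k' v) else bits0 (len S k').
Arguments received {K Q N T} M S k v k'.

Definition valid_scheme (K Q N T : nat) (M : 'I_K -> {set 'I_N})
    (W : 'I_K -> {set 'I_Q}) (S : shuffle_scheme K Q N T) : Prop :=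
  exists dec : forall k : 'I_K, realization Q N T ->
                 (forall k' : 'I_K, bits (len S k')) -> 'I_Q -> 'I_N -> bits T,
    forall (k : 'I_K) (v : realization Q N T) (q : 'I_Q) (n : 'I_N),
      q \in W k -> dec k (local M k v) (received M S k v) q n = v q n.

Definition load (R : realFieldType) (K Q N T : nat) (S : shuffle_scheme K Q N T) : R :=
  ((\sum_(k < K) len S k)%N)%:R / (Q * N * T)%N%:R.

Definition a_sd (K Q N : nat) (M : 'I_K -> {set 'I_N}) (W : 'I_K -> {set 'I_Q})
    (s d : nat) : nat :=
  #|[set qn : 'I_Q * 'I_N |
      (#|[set k : 'I_K | qn.2 \in M k]| == s) &&
      (#|[set k : 'I_K | (qn.1 \in W k) && (qn.2 \notin M k)]| == d)]|.
Arguments valid_scheme {K Q N T} M W S.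
Arguments load {R K Q N T} S.
Arguments a_sd {K Q N} M W s d.

(* Let the intermediate values be independent and uniform. For a set A of
   servers let X_A be their messages, Y_A the values available at or required
   by some server outside A, and H(A) = H(X_A | Y_A). Server k recovers the
   values it requires from its own values and the other messages, so the chain
   rule and the subadditivity of entropy give
     (|A| - 1) H(A) >= sum_(k in A) (T c_k(A) + H(A \ k)),
   where c_k(A) counts the values required by k that are neither available at
   k nor in Y_A. Give a value outside Y_A that is available at s servers and
   required by d others the weight d / (s + d - 1): the total weight of the
   values outside Y_A satisfies the same recursion with equality, so by
   induction on |A| H(A) >= T times that weight. For A the set of all servers
   the weight is the double sum of the statement and H(A) is at most the total
   length of the messages. *)

From HB Require Import structures.
From mathcomp Require Import all_boot all_order all_algebra.
From mathcomp Require Import reals exp ring lra zify.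
From mathcomp Require boolp Rstruct.
Set Implicit Arguments. Unset Strict Implicit. Unset Printing Implicit Defensive.
Import Order.TTheory GRing.Theory Num.Theory.
Local Open Scope ring_scope.

Lemma ln_le_subr1 (R : realType) (x : R) : 0 < x -> ln x <= x - 1.
Proof. by move=> x_gt0; have := @le_ln1Dx R (x - 1); rewrite [1 + _]addrC subrK; apply; lra. Qed.

Section UniformEntropy.
Variables (R : realType) (Om : finType).

Definition fiber_size {X : eqType} (f : Om -> X) (w : Om) : R :=
  \sum_x (f x == f w)%:R.

(* For w uniform on Om, [log_fibers f] is #|Om| (ln #|Om| - H(f(w))) and
   [condH f g] is #|Om| H(f(w) | g(w)), entropies in nats. *)
Definition log_fibers {X : eqType} (f : Om -> X) : R := \sum_w ln (fiber_size f w).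

Definition pairf {X Y : eqType} (f : Om -> X) (g : Om -> Y) w := (f w, g w).

Definition condH {X Y : eqType} (f : Om -> X) (g : Om -> Y) : R :=
  log_fibers g - log_fibers (pairf f g).

Definition same_fibers {X Y : eqType} (f : Om -> X) (g : Om -> Y) :=
  forall x y, f x = f y <-> g x = g y.

Lemma pairf_eq {X Y : eqType} (f : Om -> X) (g : Om -> Y) x y :
  pairf f g x = pairf f g y <-> f x = f y /\ g x = g y.
Proof. by rewrite /pairf; split=> [[-> ->] | [-> ->]]. Qed.

Lemma fiber_size_gt0 {X : eqType} (f : Om -> X) w : 0 < fiber_size f w.
Proof. by rewrite /fiber_size (bigD1 w) //= eqxx ltr_pwDl ?sumr_ge0. Qed.

Lemma fiber_size_eq {X : eqType} (f : Om -> X) w w' :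
  f w = f w' -> fiber_size f w = fiber_size f w'.
Proof. by move=> e; apply: eq_bigr => x _; rewrite e. Qed.

Lemma log_fibers_same {X Y : eqType} (f : Om -> X) (g : Om -> Y) :
  same_fibers f g -> log_fibers f = log_fibers g.
Proof.
move=> fg; apply: eq_bigr => w _; congr ln; apply: eq_bigr => x _.
by have -> : (f x == f w) = (g x == g w) by apply/idP/idP => /eqP/fg/eqP.
Qed.

Lemma condH_same_l {X X' Y : eqType} (f : Om -> X) (f' : Om -> X') (g : Om -> Y) :
  same_fibers f f' -> condH f g = condH f' g.
Proof.
move=> ff'; rewrite /condH (@log_fibers_same _ _ (pairf f g) (pairf f' g)) // => x y.
by rewrite !pairf_eq (ff' x y).
Qed.

Lemma condH_same_r {X Y Y' : eqType} (f : Om -> X) (g : Om -> Y) (g' : Om -> Y') :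
  same_fibers g g' -> condH f g = condH f g'.
Proof.
move=> gg'; rewrite /condH (log_fibers_same gg').
rewrite (@log_fibers_same _ _ (pairf f g) (pairf f g')) // => x y.
by rewrite !pairf_eq (gg' x y).
Qed.

Lemma log_fibers_le {X Y : eqType} (f : Om -> X) (g : Om -> Y) :
  (forall x y, f x = f y -> g x = g y) -> log_fibers f <= log_fibers g.
Proof.
move=> fg; apply: ler_sum => w _.
rewrite ler_ln ?posrE ?fiber_size_gt0 //; apply: ler_sum => x _.
by case: eqP => [/fg -> | _]; rewrite ?eqxx ?ler0n.
Qed.

Lemma condH_ge0 {X Y : eqType} (f : Om -> X) (g : Om -> Y) : 0 <= condH f g.
Proof. by rewrite subr_ge0; apply: log_fibers_le => x y /pairf_eq[]. Qed.

Lemma condH_pairl {X1 X2 Y : eqType} (f1 : Om -> X1) (f2 : Om -> X2) (g : Om -> Y) :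
  condH (pairf f1 f2) g = condH f1 g + condH f2 (pairf f1 g).
Proof.
rewrite /condH (@log_fibers_same _ _ (pairf (pairf f1 f2) g) (pairf f2 (pairf f1 g))).
  by rewrite addrA subrK.
by move=> x y; rewrite !pairf_eq; tauto.
Qed.

Lemma sum_fiber_inv_le1 {Z : eqType} (h : Om -> Z) (z : Z) :
  \sum_w (h w == z)%:R / fiber_size h w <= 1.
Proof.
set m := \sum_x ((h x == z)%:R : R).
have -> : \sum_w (h w == z)%:R / fiber_size h w = \sum_w (h w == z)%:R / m.
  apply: eq_bigr => w _; case: eqP => [hw | _]; last by rewrite !mul0r.
  by congr (_ / _); apply: eq_bigr => x _; rewrite hw.
rewrite -mulr_suml -/m; have [-> | m_neq0] := eqVneq m 0; first by rewrite mul0r.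
by rewrite mulfV.
Qed.

(* The terms live on the (a, (b, c))-fiber of (a x, (b x, c y)), on which
   [fiber_size b] is constant. *)
Lemma sum_pair_fibers_le {A B C : eqType} (a : Om -> A) (b : Om -> B) (c : Om -> C) x y :
  \sum_w (pairf a b x == pairf a b w)%:R * (pairf b c y == pairf b c w)%:R /
           (fiber_size (pairf a (pairf b c)) w * fiber_size b w)
  <= (b y == b x)%:R / fiber_size b x.
Proof.
have [bxy | bxy] := eqVneq (b y) (b x); last first.
  rewrite mul0r big1 // => w _; rewrite /pairf !xpair_eqE.
  have [bxw | _] := eqVneq (b x) (b w); last by rewrite andbF !mul0r.
  have [byw | _] := eqVneq (b y) (b w); last by rewrite mulr0 mul0r.
  by move: bxy; rewrite bxw byw eqxx.
rewrite mul1r; apply: le_trans (_ : \sum_w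
    (pairf a (pairf b c) w == (a x, (b x, c y)))%:R /
      fiber_size (pairf a (pairf b c)) w / fiber_size b x <= _).
  apply/ler_sum => w _; rewrite /pairf !xpair_eqE.
  have [bxw | nbxw] := eqVneq (b x) (b w); last first.
    by rewrite !(andbF, andFb) !mul0r.
  rewrite (fiber_size_eq (esym bxw)) bxy bxw eqxx andbT andTb.
  by rewrite [a w == _]eq_sym [c w == _]eq_sym -natrM mulnb invfM mulrA /pairf.
by rewrite -mulr_suml ler_piMl ?sum_fiber_inv_le1 // invr_ge0 ltW ?fiber_size_gt0.
Qed.

Lemma sum_fiber_ratio_le {A B C : eqType} (a : Om -> A) (b : Om -> B) (c : Om -> C) :
  \sum_w fiber_size (pairf a b) w * fiber_size (pairf b c) w /
           (fiber_size (pairf a (pairf b c)) w * fiber_size b w) <= #|Om|%:R.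
Proof.
have -> : (#|Om|%:R : R) = \sum_x \sum_y (b y == b x)%:R / fiber_size b x.
  rewrite -sum1_card natr_sum; apply: eq_bigr => x _.
  by rewrite -mulr_suml mulfV // gt_eqF ?fiber_size_gt0.
have -> : \sum_w fiber_size (pairf a b) w * fiber_size (pairf b c) w /
             (fiber_size (pairf a (pairf b c)) w * fiber_size b w) =
    \sum_w \sum_x \sum_y (pairf a b x == pairf a b w)%:R * (pairf b c y == pairf b c w)%:R /
             (fiber_size (pairf a (pairf b c)) w * fiber_size b w).
  apply: eq_bigr => w _; rewrite [fiber_size (pairf a b) w]/fiber_size.
  rewrite [fiber_size (pairf b c) w]/fiber_size -mulrA mulr_suml; apply: eq_bigr => x _.
  by rewrite mulr_suml mulr_sumr; apply: eq_bigr => y _; rewrite mulrA.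
rewrite exchange_big; apply: ler_sum => x _; rewrite exchange_big.
by apply: ler_sum => y _; apply: sum_pair_fibers_le.
Qed.

(* The gap is the sum of ln r over the ratios r of [sum_fiber_ratio_le], and
   ln r <= r - 1. *)
Lemma log_fibers_submod {A B C : eqType} (a : Om -> A) (b : Om -> B) (c : Om -> C) :
  log_fibers (pairf a b) + log_fibers (pairf b c) <=
  log_fibers (pairf a (pairf b c)) + log_fibers b.
Proof.
pose ratio w := fiber_size (pairf a b) w * fiber_size (pairf b c) w /
  (fiber_size (pairf a (pairf b c)) w * fiber_size b w).
have ratio_gt0 w : 0 < ratio w by rewrite !(divr_gt0, mulr_gt0) ?fiber_size_gt0.
have -> : log_fibers (pairf a b) + log_fibers (pairf b c) =
    log_fibers (pairf a (pairf b c)) + log_fibers b + \sum_w ln (ratio w).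
  have ln_ratio w : ln (ratio w) = ln (fiber_size (pairf a b) w) +
      ln (fiber_size (pairf b c) w) - ln (fiber_size (pairf a (pairf b c)) w) -
      ln (fiber_size b w).
    by rewrite ln_div ?lnM ?posrE ?mulr_gt0 ?fiber_size_gt0 // opprD addrA.
  rewrite /log_fibers (eq_bigr _ (fun w _ => ln_ratio w)) !sumrB big_split /=; lra.
rewrite gerDl; apply: le_trans (_ : \sum_w (ratio w - 1) <= _).
  by apply: ler_sum => w _; apply: ln_le_subr1.
by rewrite sumrB sumr_const subr_le0 sum_fiber_ratio_le.
Qed.

Lemma condH_pairr_le {X Y Z : eqType} (f : Om -> X) (g : Om -> Y) (h : Om -> Z) :
  condH f (pairf g h) <= condH f g.
Proof. by rewrite /condH; have := log_fibers_submod f g h; lra. Qed.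

Lemma condH_det {X Y : eqType} (f : Om -> X) (g : Om -> Y) :
  (forall x y, g x = g y -> f x = f y) -> condH f g = 0.
Proof.
move=> gf; rewrite /condH (@log_fibers_same _ _ (pairf f g) g) ?subrr // => x y.
by rewrite pairf_eq; split=> [[] | gxy] //; split=> //; apply: gf.
Qed.

Lemma condH_pairl_det {X Y Z : eqType} (f : Om -> X) (g : Om -> Y) (h : Om -> Z) :
  (forall x y, f x = f y -> g x = g y -> h x = h y) ->
  condH (pairf h f) g = condH f g.
Proof.
move=> fgh; rewrite (@condH_same_l _ _ _ _ (pairf f h)); last first.
  by move=> x y; rewrite !pairf_eq; tauto.
by rewrite condH_pairl (@condH_det _ _ h) ?addr0 // => x y /pairf_eq[]; apply: fgh.
Qed.

Lemma sum_inv_fiber_size {Y : finType} (f : Om -> Y) :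
  \sum_w (fiber_size f w)^-1 <= #|Y|%:R.
Proof.
have -> : \sum_w (fiber_size f w)^-1 = \sum_w \sum_(y : Y) (f w == y)%:R / fiber_size f w.
  apply: eq_bigr => w _; rewrite -mulr_suml (bigD1 (f w)) //= eqxx big1 ?addr0 ?mul1r //.
  by move=> y /negPf; rewrite eq_sym => ->.
rewrite exchange_big /= -sum1_card natr_sum; apply: ler_sum => y _.
exact: sum_fiber_inv_le1.
Qed.

(* Use ln r <= r - 1 with r = #|Om| / (#|Y| * fiber_size f w); the inverse fiber
   sizes add up to the number of fibers, at most #|Y|. *)
Lemma condH_le_card {Y : finType} {X : eqType} (f : Om -> Y) (g : Om -> X) :
  condH f g <= #|Om|%:R * ln #|Y|%:R.
Proof.
have [w0 _ | Om0] := pickP (fun _ : Om => true); last first.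
  rewrite /condH /log_fibers !big_pred0 // subrr.
  by rewrite (@eq_card0 _ Om) ?mul0r // => x; apply: Om0.
have Om_gt0 : (0 : R) < #|Om|%:R by rewrite ltr0n; apply/card_gt0P; exists w0.
have Y_gt0 : (0 : R) < #|Y|%:R by rewrite ltr0n; apply/card_gt0P; exists (f w0).
apply: le_trans (condH_pairr_le f (fun=> tt) g) _.
rewrite /condH (@log_fibers_same _ _ (pairf f (fun=> tt)) f); last first.
  by move=> x y; rewrite pairf_eq; tauto.
have -> : log_fibers (fun=> tt) = \sum_(w : Om) ln #|Om|%:R.
  by apply: eq_bigr => w _; rewrite /fiber_size -sum1_card natr_sum.
pose r w := #|Om|%:R / (#|Y|%:R * fiber_size f w).
have r_gt0 w : 0 < r w by rewrite divr_gt0 ?mulr_gt0 ?fiber_size_gt0.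
apply: le_trans (_ : \sum_w (ln #|Y|%:R + (r w - 1)) <= _).
  rewrite /log_fibers -sumrB; apply: ler_sum => w _; rewrite -lerBlDl.
  apply: le_trans (ln_le_subr1 (r_gt0 w)).
  by rewrite ln_div ?lnM ?posrE ?mulr_gt0 ?fiber_size_gt0 // opprD addrA addrAC.
rewrite big_split sumrB /= !sumr_const [X in _ <= X]mulr_natl gerDl subr_le0.
have -> : \sum_w r w = #|Om|%:R / #|Y|%:R * \sum_w (fiber_size f w)^-1.
  by rewrite mulr_sumr; apply: eq_bigr => w _; rewrite /r invfM mulrA.
by rewrite -ler_pdivlMl ?divr_gt0 // invf_div divfK ?gt_eqF // sum_inv_fiber_size.
Qed.

Lemma condH_sum_le {I : Type} {X Y : eqType} (F : I -> Om -> X) (g : Om -> Y) (s : seq I) :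
  condH (fun w => [seq F i w | i <- s]) g <= \sum_(i <- s) condH (F i) g.
Proof.
elim: s => [|i s IHs]; first by rewrite big_nil condH_det.
rewrite big_cons (@condH_same_l _ _ _ _ (pairf (F i) (fun w => [seq F j w | j <- s]))).
  rewrite condH_pairl lerD2l; apply: le_trans IHs.
  rewrite (@condH_same_r _ _ _ _ _ (pairf g (F i))) ?condH_pairr_le //.
  by move=> x y; rewrite !pairf_eq; tauto.
by move=> x y; rewrite pairf_eq /=; split=> [[-> ->] | [-> ->]].
Qed.
End UniformEntropy.

Section Restriction.
Variables (R : realType) (I V : finType) (v0 : V).
Local Notation Om := {ffun I -> V}.

Definition restrict (C : {set I}) (w : Om) : Om :=
  [ffun i => if i \in C then w i else v0].

Lemma restrict_eq C x y : restrict C x = restrict C y <-> {in C, x =1 y}.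
Proof.
split=> [xy i iC | xy]; last by apply/ffunP => i; rewrite !ffunE; case: ifPn => // /xy.
by have := congr1 (fun w : Om => w i) xy; rewrite !ffunE iC.
Qed.

Lemma restrictU_fibers C D :
  same_fibers (pairf (restrict C) (restrict D)) (restrict (C :|: D)).
Proof.
move=> x y; rewrite pairf_eq !restrict_eq; split=> [[xyC xyD] i | xy].
  by rewrite inE => /orP[/xyC | /xyD].
by split=> i iX; apply: xy; rewrite inE iX ?orbT.
Qed.

Lemma card_restrict_fiber C w :
  #|[set x | restrict C x == restrict C w]| = (#|V| ^ #|~: C|)%N.
Proof.
have -> : #|[set x | restrict C x == restrict C w]| =
    #|family (fun i => if i \in C then pred1 (w i) else predT)|.
  apply: eq_card => x; rewrite inE; apply/eqP/familyP => [/restrict_eq xw i | xw].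
    by case: ifPn => // iC; rewrite inE xw.
  by apply/restrict_eq => i iC; have := xw i; rewrite iC inE => /eqP.
rewrite card_family foldrE big_map big_enum /=.
rewrite (eq_bigr (fun i => if i \in ~: C then #|V| else 1%N)) -?big_mkcond /=.
  by rewrite prod_nat_const.
by move=> i _; rewrite inE; case: ifP => _; rewrite ?card1.
Qed.

Lemma fiber_size_restrict C w : fiber_size R (restrict C) w = (#|V| ^ #|~: C|)%:R.
Proof.
rewrite -(card_restrict_fiber C w) -sum1_card natr_sum big_mkcond /=.
by apply: eq_bigr => x _; rewrite inE; case: eqP.
Qed.

Lemma log_fibers_restrict C :
  log_fibers R (restrict C) = #|Om|%:R * (#|~: C|%:R * ln #|V|%:R).
Proof.
have V_gt0 : (0 : R) < #|V|%:R by rewrite ltr0n; apply/card_gt0P; exists v0.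
rewrite /log_fibers (eq_bigr _ (fun w _ => congr1 (@ln R) (fiber_size_restrict C w))).
by rewrite sumr_const natrX lnXn // !mulr_natl.
Qed.

Lemma condH_restrict C D :
  condH R (restrict C) (restrict D) = #|Om|%:R * (#|C :\: D|%:R * ln #|V|%:R).
Proof.
rewrite /condH (log_fibers_same R (restrictU_fibers C D)) !log_fibers_restrict.
have -> : #|~: D| = (#|~: (C :|: D)| + #|C :\: D|)%N.
  rewrite -(cardsID (~: C) (~: D)) setCU [~: C :&: _]setIC setDE setCK.
  by rewrite [C :\: D]setDE [C :&: _]setIC.
by rewrite natrD; ring.
Qed.
End Restriction.

Lemma ln_card_bitvec (R : realType) n : ln (#|{ffun 'I_n -> bool}|%:R : R) = n%:R * ln 2.
Proof. by rewrite card_ffun card_bool card_ord natrX lnXn // mulr_natl. Qed.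

Definition weight (F : numFieldType) (s d : nat) : F :=
  if (0 < s)%N then d%:R / (s + d - 1)%N%:R else 0.

Lemma mul_weight (F : numFieldType) s d :
  (0 < s)%N -> (s + d - 1)%N%:R * weight F s d = d%:R.
Proof.
rewrite /weight => s_gt0; rewrite s_gt0; case: d => [|d]; first by rewrite mul0r mulr0.
by rewrite mulrC divfK // pnatr_eq0 addnS subn1 -lt0n ltn_addr.
Qed.

Lemma ratr_weight (F : numFieldType) s d : ratr (weight rat s d) = weight F s d.
Proof. by rewrite /weight; case: ifP => _; rewrite ?rmorph0 // fmorph_div !rmorph_nat. Qed.

Section Assignments.
Variables (K Q N : nat) (M : 'I_K -> {set 'I_N}) (W : 'I_K -> {set 'I_Q}).
Local Notation value := ('I_Q * 'I_N)%type.
Implicit Types (A : {set 'I_K}) (i : value).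

Definition avail (k : 'I_K) := [set i : value | i.2 \in M k].
Definition wanted (k : 'I_K) := [set i : value | i.1 \in W k].
(* [holders i] and [demanders i] have the sizes s and d of [a_sd]. *)
Definition holders i := [set k | i.2 \in M k].
Definition demanders i := [set k | (i.1 \in W k) && (i.2 \notin M k)].
Definition known_outside A := \bigcup_(j | j \notin A) (avail j :|: wanted j).
Definition uncovered A k := wanted k :\: (avail k :|: known_outside A).
Definition value_weight (F : numFieldType) i := weight F #|holders i| #|demanders i|.
Definition outside_weight (F : numFieldType) A :=
  \sum_(i | i \notin known_outside A) value_weight F i.

Lemma known_outside_setT : known_outside setT = set0.
Proof. by rewrite /known_outside big_pred0 // => j; rewrite inE. Qed.

Lemma known_outsideD1 A k :
  k \in A -> known_outside (A :\ k) = wanted k :|: (avail k :|: known_outside A).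
Proof.
move=> kA; rewrite /known_outside (bigD1 k) ?inE ?eqxx //= setUA [wanted k :|: _]setUC.
congr (_ :|: _); apply: eq_bigl => j; rewrite !inE negb_and negbK.
by case: eqVneq => [-> | ] /=; rewrite ?kA ?andbT.
Qed.

Lemma holdersIdemanders i : holders i :&: demanders i = set0.
Proof. by apply/setP => k; rewrite !inE; case: (i.2 \in M k); rewrite ?andbF. Qed.

Lemma holdersUdemanders i : holders i :|: demanders i = [set k | i \in avail k :|: wanted k].
Proof. by apply/setP => k; rewrite !inE; case: (i.2 \in M k); rewrite /= ?andbT. Qed.

Lemma mem_known_outside A i k :
  i \notin known_outside A -> i \in avail k :|: wanted k -> k \in A.
Proof. by move=> iB ik; apply: contraNT iB => kA; apply/bigcupP; exists k. Qed.

Lemma holdersUdemanders_sub A i :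
  i \notin known_outside A -> holders i :|: demanders i \subset A.
Proof.
by move=> iB; apply/subsetP => k; rewrite holdersUdemanders inE; apply: mem_known_outside.
Qed.

Lemma card_holdersUdemanders i :
  #|holders i :|: demanders i| = (#|holders i| + #|demanders i|)%N.
Proof. by rewrite cardsU holdersIdemanders cards0 subn0. Qed.

Lemma mem_uncovered A k i : i \notin known_outside A ->
  (i \in uncovered A k) = (k \in demanders i).
Proof. by move=> iB; rewrite !inE (negPf iB) orbF andbC. Qed.

Lemma mem_known_outsideD1 A k i : k \in A ->
  (i \notin known_outside (A :\ k)) =
  (i \notin known_outside A) && (k \notin holders i :|: demanders i).
Proof.
move=> kA; rewrite known_outsideD1 // holdersUdemanders !inE.
by case: (i.1 \in W k); case: (i.2 \in M k); case: (i \in known_outside A).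
Qed.

Lemma sum_uncovered (F : numFieldType) A :
  \sum_(k in A) #|uncovered A k|%:R =
  \sum_(i | i \notin known_outside A) #|demanders i|%:R :> F.
Proof.
under eq_bigr => k _ do rewrite -sum1_card natr_sum big_mkcond /=.
rewrite exchange_big [RHS]big_mkcond; apply: eq_bigr => i _ /=.
case: ifPn => iB; last first.
  by rewrite big1 // => k _; rewrite /uncovered !inE (negbNE iB) orbT.
under eq_bigr => k _ do rewrite (mem_uncovered k iB).
rewrite -big_mkcondr -sum1_card natr_sum; apply: eq_bigl => k; apply: andb_idl => kD.
by apply: (subsetP (holdersUdemanders_sub iB)); rewrite inE kD orbT.
Qed.

Lemma sum_outside_weightD1 (F : numFieldType) A :
  \sum_(k in A) outside_weight F (A :\ k) =
  \sum_(i | i \notin known_outside A)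
    (#|A| - (#|holders i| + #|demanders i|))%N%:R * value_weight F i.
Proof.
under eq_bigr => k kA do rewrite /outside_weight big_mkcond.
rewrite exchange_big [RHS]big_mkcond; apply: eq_bigr => i _ /=.
under eq_bigr => k kA do rewrite mem_known_outsideD1 //.
case: ifPn => iB; last by rewrite big1.
under eq_bigr do rewrite andTb.
rewrite -big_mkcondr sumr_const -card_holdersUdemanders -cardsDS.
  by rewrite mulr_natl; congr (_ *+ _); apply: eq_card => k; rewrite in_setD andbC.
exact: holdersUdemanders_sub.
Qed.

(* Value by value, this reads (#|A| - 1) w <= d + (#|A| - s - d) w, that is
   (s + d - 1) w <= d, an equality when s > 0. *)
Lemma outside_weight_rec (F : realFieldType) A :
  (#|A|%:R - 1) * outside_weight F A <=
  \sum_(k in A) (#|uncovered A k|%:R + outside_weight F (A :\ k)).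
Proof.
rewrite big_split /= sum_uncovered sum_outside_weightD1 -big_split mulr_sumr /=.
apply: ler_sum => i iB; set s := #|holders i|; set d := #|demanders i|.
have sdA : (s + d <= #|A|)%N.
  by rewrite -card_holdersUdemanders subset_leq_card ?holdersUdemanders_sub.
rewrite /value_weight -/s -/d; have [s0 | s_gt0] := posnP s.
  by rewrite s0 /weight /= !mulr0 addr0 ler0n.
rewrite -{1}(mul_weight F d s_gt0) -mulrDl -natrD.
have -> : (s + d - 1 + (#|A| - (s + d)) = #|A| - 1)%N by lia.
by rewrite natrB // (leq_trans s_gt0) // (leq_trans _ sdA) ?leq_addr.
Qed.

Lemma outside_weight_small (F : numFieldType) A :
  (#|A| <= 1)%N -> outside_weight F A = 0.
Proof.
move=> A_le1; apply: big1 => i iB; rewrite /value_weight /weight.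
have := leq_trans (subset_leq_card (holdersUdemanders_sub iB)) A_le1.
rewrite card_holdersUdemanders; have [-> _ | d_gt0 sd_le1] := posnP #|demanders i|.
  by rewrite mul0r; case: ifP.
by rewrite ifN // -leqNgt; lia.
Qed.

Lemma outside_weight_setT (F : numFieldType) :
  outside_weight F setT = \sum_i value_weight F i.
Proof. by rewrite /outside_weight known_outside_setT; apply: eq_bigl => i; rewrite inE. Qed.

Lemma ler_sum_value_weight_rat (F : numFieldType) (a b : nat) :
  (a%:R * \sum_i value_weight F i <= b%:R) = (a%:R * \sum_i value_weight rat i <= b%:R).
Proof.
rewrite -(ler_rat F) rmorphM rmorph_sum !rmorph_nat.
by rewrite [in RHS](eq_bigr (value_weight F)) => // i _; apply: ratr_weight.
Qed.

Lemma sum_a_sd (F : numFieldType) :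
  \sum_(1 <= s < K.+1) \sum_(1 <= d < (K - s).+1)
     ((a_sd M W s d)%:R * d%:R / (s + d - 1)%N%:R) =
  \sum_i value_weight F i.
Proof.
under eq_bigr => s _ do under eq_bigr => d _ do
  rewrite -mulrA mulr_natl -sumr_const big_mkcond.
under eq_bigr => s _ do rewrite exchange_big.
rewrite exchange_big; apply: eq_bigr => i _ /=.
under eq_bigr => s _ do under eq_bigr => d _ do rewrite inE eq_sym [_ == d]eq_sym.
set s_i := #|holders i|; set d_i := #|demanders i|.
under eq_bigr => s _ do rewrite -big_mkcond big_nat1_cond_eq.
rewrite -big_mkcond (big_nat1_cond_eq _ _ (fun s => 0 < d_i < (K - s).+1)%N).
rewrite /value_weight /weight -/s_i -/d_i.
have sd_leK : (s_i + d_i <= K)%N.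
  by rewrite -card_holdersUdemanders -[X in (_ <= X)%N]card_ord max_card.
have [-> // | s_gt0] := posnP s_i; have [-> | d_gt0] := posnP d_i.
  by rewrite mul0r; case: ifP.
by rewrite ifT //= !ltnS; apply/andP; split; lia.
Qed.
End Assignments.

Section ShuffleScheme.
Variables (R : realType) (K Q N T : nat).
Variables (M : 'I_K -> {set 'I_N}) (W : 'I_K -> {set 'I_Q}) (S : shuffle_scheme K Q N T).
Hypothesis S_valid : valid_scheme M W S.

Local Notation value := ('I_Q * 'I_N)%type.
Local Notation Om := {ffun value -> {ffun 'I_T -> bool}}.
Local Notation restr := (restrict [ffun=> false]).
Local Notation avail := (@avail K Q N M).
Local Notation wanted := (@wanted K Q N W).
Local Notation known_outside := (@known_outside K Q N M W).
Local Notation uncovered := (@uncovered K Q N M W).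
Implicit Types (A : {set 'I_K}) (k j : 'I_K) (x y w : Om).

Definition realize w : realization Q N T := fun q n t => w (q, n) t.

Definition message k w : {ffun 'I_(len S k) -> bool} :=
  [ffun t => enc S k (local M k (realize w)) t].

Definition messages A w : seq (seq bool) :=
  [seq val (fgraph (message k w)) | k <- enum A].

Definition msgH A := condH R (messages A) (restr (known_outside A)).

Lemma local_realize_eq k x y :
  {in avail k, x =1 y} -> local M k (realize x) = local M k (realize y).
Proof.
move=> xy; apply: boolp.functional_extensionality_dep => q.
apply: boolp.functional_extensionality_dep => n; rewrite /local; case: ifP => // nM.
by apply: boolp.functional_extensionality_dep => t; rewrite /realize xy // inE.
Qed.

Lemma message_eq k x y : {in avail k, x =1 y} -> message k x = message k y.
Proof. by move=> xy; rewrite /message (local_realize_eq xy). Qed.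

Lemma enc_eq k x y : message k x = message k y ->
  enc S k (local M k (realize x)) = enc S k (local M k (realize y)).
Proof.
move=> xy; apply: boolp.functional_extensionality_dep => t.
by move/ffunP: xy => /(_ t); rewrite !ffunE.
Qed.

Lemma messages_eq A x y :
  messages A x = messages A y <-> {in A, forall k, message k x = message k y}.
Proof.
split=> [/eq_in_map xy k kA | xy]; last by apply/eq_in_map => k; rewrite mem_enum => /xy ->.
by apply/(can_inj fgraphK)/val_inj/xy; rewrite mem_enum.
Qed.

Lemma wanted_determined A k x y : k \in A ->
  {in A :\ k, forall j, message j x = message j y} ->
  {in avail k :|: known_outside A, x =1 y} -> {in wanted k, x =1 y}.
Proof.
case: S_valid => dec dec_ok kA xy_msg xy [q n]; rewrite inE /= => qW.
have local_k : local M k (realize x) = local M k (realize y).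
  by apply: local_realize_eq => i ik; apply: xy; rewrite inE ik.
have enc_j j : enc S j (local M j (realize x)) = enc S j (local M j (realize y)).
  have [jA | jA] := boolP (j \in A).
    have [-> // | jk] := eqVneq j k; first by rewrite local_k.
    by apply/enc_eq/xy_msg; rewrite !inE jk.
  congr (enc S j); apply: local_realize_eq => i ij; apply: xy.
  by rewrite inE; apply/orP; right; apply/bigcupP; exists j; rewrite // inE ij.
have received_k : received M S k (realize x) = received M S k (realize y).
  by apply: boolp.functional_extensionality_dep => j; rewrite /received enc_j.
apply/ffunP => t; have := dec_ok k (realize x) q n qW.
by rewrite received_k local_k dec_ok // => /(congr1 (fun b : bits T => b t)).
Qed.

Lemma condH_messages_le {Y : eqType} A (g : Om -> Y) :
  condH R (messages A) g <= \sum_(k in A) condH R (message k) g.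
Proof.
rewrite -big_enum /=.
apply: le_trans (condH_sum_le R (fun k w => val (fgraph (message k w))) g (enum A)) _.
apply/ler_sum => k _; rewrite (condH_same_l _ (f' := message k)) // => x y.
by split=> [/val_inj/(can_inj fgraphK) | ->].
Qed.

Lemma msgH_chain A k : k \in A ->
  msgH A = condH R (message k) (restr (known_outside A)) +
           condH R (messages (A :\ k)) (pairf (message k) (restr (known_outside A))).
Proof.
move=> kA; rewrite -condH_pairl /msgH; apply: condH_same_l => x y.
rewrite pairf_eq !messages_eq; split=> [xy | [xy_k xy] j jA].
  by split=> [|j /setD1P[_ jA]]; apply: xy.
by have [-> // | jk] := eqVneq j k; apply: xy; rewrite !inE jk.
Qed.

Definition value_entropy : R := #|Om|%:R * (T%:R * ln 2).

(* Conditioning also on the values available at k makes k's message redundant,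
   and then, by validity, determines the values wanted by k. *)
Lemma msgH_step A k : k \in A ->
  value_entropy * #|uncovered A k|%:R + msgH (A :\ k) <=
  condH R (messages (A :\ k)) (pairf (message k) (restr (known_outside A))).
Proof.
move=> kA; set B := known_outside A; set X := messages (A :\ k).
apply: le_trans (condH_pairr_le R X (pairf (message k) (restr B)) (restr (avail k))).
rewrite (@condH_same_r R _ _ _ _ _ _ (restr (avail k :|: B))); last first.
  move=> x y; rewrite -(restrictU_fibers _ _ _ x y) !pairf_eq !restrict_eq.
  split=> [[[_ xyB] xyk] | [xyk xyB]]; do ?split => //.
  exact: message_eq.
rewrite -(@condH_pairl_det R _ _ _ _ _ _ (restr (wanted k))); last first.
  move=> x y /messages_eq xy_msg /restrict_eq xy; apply/restrict_eq.
  exact: wanted_determined kA xy_msg xy.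
rewrite condH_pairl condH_restrict ln_card_bitvec /value_entropy.
rewrite (condH_same_r R _ (restrictU_fibers _ _ _)) -known_outsideD1 //.
by rewrite lerD2r mulrC mulrCA.
Qed.

Lemma msgH_rec A :
  \sum_(k in A) (value_entropy * #|uncovered A k|%:R +
                 msgH (A :\ k))
  <= (#|A|%:R - 1) * msgH A.
Proof.
have chain : #|A|%:R * msgH A =
    \sum_(k in A) (condH R (message k) (restr (known_outside A)) +
      condH R (messages (A :\ k)) (pairf (message k) (restr (known_outside A)))).
  by rewrite mulr_natl -sumr_const; apply: eq_bigr => k /msgH_chain.
have steps : \sum_(k in A) (value_entropy *
      #|uncovered A k|%:R + msgH (A :\ k)) <=
    \sum_(k in A) condH R (messages (A :\ k)) (pairf (message k) (restr (known_outside A))).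
  by apply: ler_sum => k /msgH_step.
have subadd : msgH A <= \sum_(k in A) condH R (message k) (restr (known_outside A)).
  exact: condH_messages_le.
by rewrite mulrBl mul1r chain [X in _ <= X - _]big_split /=; lra.
Qed.

Lemma msgH_setT_le : msgH setT <= #|Om|%:R * ((\sum_k len S k)%N%:R * ln 2).
Proof.
apply: le_trans (condH_messages_le _ _) _.
rewrite [X in X <= _](eq_bigl xpredT) => [|k]; last by rewrite inE.
rewrite natr_sum mulr_suml mulr_sumr; apply: ler_sum => k _.
by apply: le_trans (condH_le_card R _ _) _; rewrite ln_card_bitvec.
Qed.

Lemma value_entropy_ge0 : 0 <= value_entropy.
Proof. by rewrite !mulr_ge0 ?ln_ge0 ?ler1n. Qed.

Lemma msgH_ge_outside_weight A : value_entropy * outside_weight M W R A <= msgH A.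
Proof.
move: {2}#|A| (leqnn #|A|) => n; elim: n A => [|n IHn] A A_le.
  by rewrite outside_weight_small ?(leq_trans A_le) // mulr0 condH_ge0.
have [A_le1 | A_gt1] := leqP #|A| 1.
  by rewrite outside_weight_small // mulr0 condH_ge0.
have A1_gt0 : 0 < #|A|%:R - 1 :> R by rewrite subr_gt0 ltr1n.
rewrite -(ler_pM2l A1_gt0); apply: le_trans (msgH_rec A).
rewrite mulrCA; apply: le_trans (ler_wpM2l value_entropy_ge0 (outside_weight_rec _ _ _ A)) _.
rewrite mulr_sumr; apply: ler_sum => k kA; rewrite mulrDr lerD2l; apply: IHn.
by rewrite (cardsD1 k A) kA add1n ltnS in A_le.
Qed.

Lemma load_bound_real : T%:R * \sum_i value_weight M W R i <= (\sum_k len S k)%N%:R.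
Proof.
have := le_trans (msgH_ge_outside_weight setT) msgH_setT_le.
rewrite outside_weight_setT /value_entropy.
set o := #|Om|%:R; set l := ln 2; set w := \sum_i _; set b := ((\sum_k len S k)%N)%:R.
have ol_gt0 : 0 < o * l.
  by rewrite mulr_gt0 ?ln_gt0 ?ltr1n // ltr0n; apply/card_gt0P; exists [ffun=> [ffun=> false]].
have -> : o * (T%:R * l) * w = o * l * (T%:R * w) by ring.
have -> : o * (b * l) = o * l * b by ring.
by rewrite ler_pM2l.
Qed.
End ShuffleScheme.

Import Rstruct.

(* The bound compares rationals, so any concrete realType may carry the entropy argument. *)
Lemma load_bound (F : realFieldType) (K Q N T : nat)
    (M : 'I_K -> {set 'I_N}) (W : 'I_K -> {set 'I_Q}) (S : shuffle_scheme K Q N T) :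
  valid_scheme M W S ->
  T%:R * \sum_i value_weight M W F i <= (\sum_k len S k)%N%:R.
Proof.
move=> S_valid; rewrite ler_sum_value_weight_rat.
by rewrite -(ler_sum_value_weight_rat _ _ Rdefinitions.R) load_bound_real.
Qed.

Theorem lemma1 (R : realFieldType) (K Q N T : nat)
    (M : 'I_K -> {set 'I_N}) (W : 'I_K -> {set 'I_Q})
    (S : shuffle_scheme K Q N T) :
  (0 < Q)%N -> (0 < N)%N -> (0 < T)%N ->
  map_assignment M -> reduce_assignment W -> valid_scheme M W S ->
  (Q * N)%N%:R^-1 *
    \sum_(1 <= s < K.+1) \sum_(1 <= d < (K - s).+1)
       ((a_sd M W s d)%:R * d%:R / (s + d - 1)%N%:R)
  <= @load R K Q N T S.
Proof.
move=> Q_gt0 N_gt0 T_gt0 _ _ S_valid.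
have QN_neq0 : (Q * N)%N%:R != 0 :> R by rewrite pnatr_eq0 -lt0n muln_gt0 Q_gt0.
rewrite /load (sum_a_sd _ _ R) ler_pdivlMr ?ltr0n ?muln_gt0 ?Q_gt0 ?N_gt0 //.
by rewrite [(Q * N * T)%:R]natrM mulrAC mulKf // load_bound.
Qed.
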